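(* Let $h_{11},h_{20},h_{31},h_{40}\in\mathbb{R}$ and consider the planar Hamiltonian system $$\dot x=\frac{\partial \bar H_2}{\partial y}(x,y),\qquad \dot y=-\frac{\partial \bar H_2}{\partial x}(x,y),$$ where $$\bar H_2(x,y)=\tfrac12 y^2+(8h_{11}h_{20}+4h_{31})x^3+(4h_{20}-2h_{11}^2)x^2y+\tfrac12 y^3+\big[2h_{11}^2(h_{11}^2+4h_{20})+8(h_{11}h_{31}-h_{40})\big]x^4+(8h_{11}h_{20}+4h_{31})x^3y+(2h_{20}-h_{11}^2)x^2y^2+\tfrac18 y^4 .$$ Consider the conditions (A) $h_{31}\neq -2h_{11}h_{20}$; (B) $h_{31}=-2h_{11}h_{20}$ and $h_{20}^2+h_{40}>0$; (C) $h_{31}=-2h_{11}h_{20}$ and $h_{20}^2+h_{40}<0$. Then the origin is an isolated nilpotent singular point of this system if and only if one of (A), (B), (C) holds. Moreover, the origin is (i) a cusp of order 1 if and only if (A) holds; (ii) a nilpotent saddle of order 1 if and only if (B) holds; (iii) a nilpotent center of order 1 if and only if (C) holds.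
   Context: Let $H(x,y)=\frac{\omega}{2}y^2+\sum_{i+j\ge 3}h_{ij}x^iy^j$ with $\omega>0$ be analytic near the origin (so the origin is a nilpotent critical point of $\dot x=H_y,\ \dot y=-H_x$). By the implicit function theorem there is a unique analytic function $\varphi(x)=O(x^2)$ with $H_y(x,\varphi(x))=0$ for $|x|$ small. Write $H_0^*(x)=H(x,\varphi(x))=\sum_{j\ge k}h_jx^j$ with $h_k\neq 0$, $k\ge 2$ (when $H_0^*\not\equiv 0$). The origin is called a cusp of order $m$ if $k=2m+1$; a nilpotent center of order $m$ if $k=2m+2$ and $h_k>0$; a nilpotent saddle of order $m$ if $k=2m+2$ and $h_k<0$. *)

From Stdlib Require Import Reals.
From Coquelicot Require Import Coquelicot.
Open Scope R_scope.

Definition Hx (H : R -> R -> R) (x y : R) : R := Derive (fun s => H s y) x.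
Definition Hy (H : R -> R -> R) (x y : R) : R := Derive (fun t => H x t) y.

Definition field1 (H : R -> R -> R) (x y : R) : R := Hy H x y.
Definition field2 (H : R -> R -> R) (x y : R) : R := - Hx H x y.

Definition j11 H x y := Derive (fun s => field1 H s y) x.
Definition j12 H x y := Derive (fun t => field1 H x t) y.
Definition j21 H x y := Derive (fun s => field2 H s y) x.
Definition j22 H x y := Derive (fun t => field2 H x t) y.

Definition singular_origin (H : R -> R -> R) : Prop :=
  field1 H 0 0 = 0 /\ field2 H 0 0 = 0.

Definition nilpotent_origin (H : R -> R -> R) : Prop :=
  let a := j11 H 0 0 in let b := j12 H 0 0 in
  let c := j21 H 0 0 in let d := j22 H 0 0 in
  (a * a + b * c = 0 /\ a * b + b * d = 0 /\
   c * a + d * c = 0 /\ c * b + d * d = 0) /\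
  ~ (a = 0 /\ b = 0 /\ c = 0 /\ d = 0).

Definition isolated_singular_origin (H : R -> R -> R) : Prop :=
  singular_origin H /\
  exists eps, 0 < eps /\
    forall x y, 0 < x * x + y * y < eps * eps ->
      ~ (field1 H x y = 0 /\ field2 H x y = 0).

Definition isolated_nilpotent_singular_origin (H : R -> R -> R) : Prop :=
  isolated_singular_origin H /\ nilpotent_origin H.

(* H_0^*(x) = H(x, phi(x)) = sum_{j>=k} h_j x^j with h_k = hk <> 0, where
   phi is the analytic function with phi(x) = O(x^2) and H_y(x, phi(x)) = 0
   for |x| small (unique by the implicit function theorem, so an existential
   over phi is faithful).  Analyticity is expressed by convergent power series
   on a neighbourhood of 0. *)
Definition H0star_leading (H : R -> R -> R) (k : nat) (hk : R) : Prop :=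
  exists delta : R, 0 < delta /\
  exists (phi : R -> R) (p a : nat -> R),
    p 0%nat = 0 /\ p 1%nat = 0 /\
    (forall x, Rabs x < delta -> is_pseries p x (phi x)) /\
    (forall x, Rabs x < delta -> Hy H x (phi x) = 0) /\
    (forall x, Rabs x < delta -> is_pseries a x (H x (phi x))) /\
    (forall j, (j < k)%nat -> a j = 0) /\
    a k = hk /\ hk <> 0.

Definition cusp_of_order (H : R -> R -> R) (m : nat) : Prop :=
  exists hk, H0star_leading H (2 * m + 1) hk.

Definition nilpotent_center_of_order (H : R -> R -> R) (m : nat) : Prop :=
  exists hk, H0star_leading H (2 * m + 2) hk /\ 0 < hk.

Definition nilpotent_saddle_of_order (H : R -> R -> R) (m : nat) : Prop :=
  exists hk, H0star_leading H (2 * m + 2) hk /\ hk < 0.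

Definition H2bar (h11 h20 h31 h40 : R) (x y : R) : R :=
  /2 * y ^ 2
  + (8 * h11 * h20 + 4 * h31) * x ^ 3
  + (4 * h20 - 2 * h11 ^ 2) * x ^ 2 * y
  + /2 * y ^ 3
  + (2 * h11 ^ 2 * (h11 ^ 2 + 4 * h20) + 8 * (h11 * h31 - h40)) * x ^ 4
  + (8 * h11 * h20 + 4 * h31) * x ^ 3 * y
  + (2 * h20 - h11 ^ 2) * x ^ 2 * y ^ 2
  + /8 * y ^ 4.

(* Put a := 8 h11 h20 + 4 h31, b := 4 h20 - 2 h11^2 and c the coefficient of
   x^4, so that H2bar = Habc a b c.  Writing u = 1 + y, the combination
   u H_x - 2 b x H_y equals x^2 (3 a u^2 + (4 c - 2 b^2) x u - 2 a b x^2), so the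
   field has no zeros near the origin other than the origin unless a = 0 and
   c = b^2/2, in which case y = sqrt (1 - 2 b x^2) - 1 is a curve of zeros.
   The solution phi of H_y (x, phi x) = 0 is obtained as a power series by
   iterating the fixed-point form of that equation on coefficients, convergence
   following from a majorant bound on sum |phi_n| r^n.  Since phi x = x^2 g x
   with g 0 = - b, one gets H (x, phi x) = a x^3 + (c - b^2/2) x^4 + O(x^5) when
   a = 0, and then c - b^2/2 = -8 (h20^2 + h40). *)

From Stdlib Require Import Reals Arith Lra Lia Psatz FunctionalExtensionality.
From Coquelicot Require Import Coquelicot.
Open Scope R_scope.

(** * The family [Habc] and the zeros of its field *)

Definition Habc (a b c : R) (x y : R) : R :=
  /2 * y ^ 2 + a * x ^ 3 + b * x ^ 2 * y + /2 * y ^ 3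
  + c * x ^ 4 + a * x ^ 3 * y + b / 2 * x ^ 2 * y ^ 2 + /8 * y ^ 4.

Lemma H2bar_Habc h11 h20 h31 h40 :
  H2bar h11 h20 h31 h40 =
  Habc (8 * h11 * h20 + 4 * h31) (4 * h20 - 2 * h11 ^ 2)
       (2 * h11 ^ 2 * (h11 ^ 2 + 4 * h20) + 8 * (h11 * h31 - h40)).
Proof.
  extensionality x; extensionality y. unfold H2bar, Habc. field.
Qed.

Lemma Hy_Habc a b c x y :
  Hy (Habc a b c) x y = y + b * x ^ 2 + 3 / 2 * y ^ 2 + a * x ^ 3 + b * x ^ 2 * y + /2 * y ^ 3.
Proof. unfold Hy, Habc. apply is_derive_unique. auto_derive; auto. field. Qed.

Lemma Hx_Habc a b c x y :
  Hx (Habc a b c) x y =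
  3 * a * x ^ 2 + 2 * b * x * y + 4 * c * x ^ 3 + 3 * a * x ^ 2 * y + b * x * y ^ 2.
Proof. unfold Hx, Habc. apply is_derive_unique. auto_derive; auto. field. Qed.

Lemma Derive_poly_at0 (f : R -> R) (p q r s : R) :
  (forall t, f t = p + q * t + r * t ^ 2 + s * t ^ 3) -> Derive f 0 = q.
Proof.
  intros Ef. rewrite (Derive_ext _ _ _ Ef). apply is_derive_unique.
  auto_derive; auto. ring.
Qed.

Lemma Habc_nilpotent a b c : nilpotent_origin (Habc a b c).
Proof.
  unfold nilpotent_origin, j11, j12, j21, j22, field1, field2.
  rewrite (Derive_poly_at0 _ 0 0 b a), (Derive_poly_at0 _ 0 1 (3 / 2) (/2)),
    (Derive_poly_at0 _ 0 0 (- (3 * a)) (- (4 * c))), (Derive_poly_at0 _ 0 0 0 0);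
    intros; rewrite ?Hy_Habc, ?Hx_Habc; try ring.
  split; [repeat split; ring | lra].
Qed.

Lemma quadratic_nonzero_near0 p q r : p <> 0 ->
  exists d, 0 < d /\ forall t, Rabs t < d -> p + q * t + r * t ^ 2 <> 0.
Proof.
  intros Hp. set (K := 1 + Rabs q + Rabs r).
  assert (HK : 1 <= K) by (unfold K; pose proof (Rabs_pos q); pose proof (Rabs_pos r); lra).
  pose proof (Rabs_pos_lt p Hp).
  exists (Rmin 1 (Rabs p / K)). split.
  { apply Rmin_pos; [lra | apply Rdiv_lt_0_compat; lra]. }
  intros t Ht E.
  pose proof (Rmin_l 1 (Rabs p / K)); pose proof (Rmin_r 1 (Rabs p / K)).
  assert (HtK : Rabs t * K < Rabs p).
  { apply (Rmult_lt_reg_r (/ K)); [apply Rinv_0_lt_compat; lra|].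
    rewrite Rmult_assoc, Rinv_r by lra. lra. }
  assert (Hsq : Rabs (t ^ 2) <= Rabs t) by
    (rewrite <- RPow_abs; pose proof (Rabs_pos t); simpl; nra).
  assert (Rabs p <= Rabs q * Rabs t + Rabs r * Rabs t).
  { replace p with (- (q * t + r * t ^ 2)) by lra. rewrite Rabs_Ropp.
    eapply Rle_trans; [apply Rabs_triang|]. rewrite !Rabs_mult.
    pose proof (Rabs_pos r). nra. }
  unfold K in HtK. pose proof (Rabs_pos t). nra.
Qed.

Lemma quadratic_nonzero_punctured p q r : p <> 0 \/ q <> 0 ->
  exists d, 0 < d /\ forall t, t <> 0 -> Rabs t < d -> p + q * t + r * t ^ 2 <> 0.
Proof.
  destruct (Req_dec p 0) as [-> | Hp]; intros Hpq.
  - destruct (quadratic_nonzero_near0 q r 0) as [d [Hd Hnz]]; [tauto|].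
    exists d; split; auto. intros t Ht0 Ht E. apply (Hnz t Ht).
    apply (Rmult_eq_reg_l t); [lra | auto].
  - destruct (quadratic_nonzero_near0 p q r Hp) as [d [Hd Hnz]].
    exists d; split; auto.
Qed.

Lemma Habc_field_combination a b c x y :
  (1 + y) * Hx (Habc a b c) x y - 2 * b * x * Hy (Habc a b c) x y =
  x ^ 2 * (3 * a * (1 + y) ^ 2 + (4 * c - 2 * b ^ 2) * x * (1 + y) - 2 * a * b * x ^ 2).
Proof. rewrite Hx_Habc, Hy_Habc. field. Qed.

Lemma Habc_singular_origin a b c : singular_origin (Habc a b c).
Proof. unfold singular_origin, field1, field2. rewrite Hy_Habc, Hx_Habc. split; ring. Qed.

Lemma Habc_isolated a b c : a <> 0 \/ c <> b ^ 2 / 2 ->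
  isolated_singular_origin (Habc a b c).
Proof.
  intros Hcoef. split; [apply Habc_singular_origin|].
  destruct (quadratic_nonzero_punctured (3 * a) (4 * c - 2 * b ^ 2) (- 2 * a * b))
    as [d [Hd Hnz]]; [destruct Hcoef; [left | right]; lra|].
  exists (Rmin (/2) (d / 2)). split; [apply Rmin_pos; lra|].
  intros x y [Hpos Hlt] [E1 E2]. unfold field1, field2 in E1, E2.
  destruct (triangle_rectangle_lt x y (Rmin (/2) (d / 2))) as [Hxe Hye];
    [unfold Rsqr; lra|].
  rewrite (Rabs_right (Rmin _ _)) in Hxe, Hye by (apply Rle_ge, Rlt_le, Rmin_pos; lra).
  pose proof (Rmin_l (/2) (d / 2)); pose proof (Rmin_r (/2) (d / 2)).
  apply Rabs_def2 in Hye.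
  destruct (Req_dec x 0) as [-> | Hx0].
  - rewrite Hy_Habc in E1.
    assert (Ey : y * ((1 + y) * (2 + y)) = 0) by nra.
    apply Rmult_integral in Ey. destruct Ey as [-> | Ey]; [nra|].
    apply Rmult_integral in Ey. lra.
  - set (u := 1 + y).
    assert (Q : 3 * a * u ^ 2 + (4 * c - 2 * b ^ 2) * x * u - 2 * a * b * x ^ 2 = 0).
    { apply (Rmult_eq_reg_l (x ^ 2)); [| apply pow_nonzero; auto].
      unfold u. rewrite <- Habc_field_combination, E1.
      replace (Hx (Habc a b c) x y) with 0 by lra. ring. }
    apply (Hnz (x / u)).
    + unfold Rdiv. apply Rmult_integral_contrapositive. split; auto.
      apply Rinv_neq_0_compat. unfold u. lra.
    + unfold Rdiv. rewrite Rabs_mult, Rabs_inv, (Rabs_right u) by (unfold u; lra).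
      apply (Rmult_lt_reg_r u); [unfold u; lra|].
      rewrite Rmult_assoc, Rinv_l by (unfold u; lra). unfold u. pose proof (Rabs_pos x). nra.
    + apply (Rmult_eq_reg_l (u ^ 2)); [| apply pow_nonzero; unfold u; lra].
      rewrite Rmult_0_r, <- Q. field. unfold u; lra.
Qed.

Lemma Habc_not_isolated b c : c = b ^ 2 / 2 -> ~ isolated_singular_origin (Habc 0 b c).
Proof.
  intros Hc [_ [eps [Heps Hiso]]].
  pose proof (Rabs_pos b).
  set (x := Rmin eps 1 / (2 * (1 + Rabs b))).
  assert (Hm : 0 < Rmin eps 1) by (apply Rmin_pos; lra).
  pose proof (Rmin_l eps 1); pose proof (Rmin_r eps 1).
  assert (Hxpos : 0 < x) by (unfold x; apply Rdiv_lt_0_compat; lra).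
  assert (Hxb : 2 * (1 + Rabs b) * x = Rmin eps 1) by (unfold x; field; lra).
  assert (Hbx : 2 * Rabs b * x < 1) by nra.
  assert (H2bx : 2 * b * x ^ 2 < 1).
  { pose proof (Rle_abs b). simpl. nra. }
  set (s := sqrt (1 - 2 * b * x ^ 2)).
  assert (Hs : s * s = 1 - 2 * b * x ^ 2) by (apply sqrt_sqrt; lra).
  assert (Hs0 : 0 <= s) by apply sqrt_pos.
  apply (Hiso x (s - 1)).
  - assert (Hsy : (s - 1) ^ 2 * (s + 1) ^ 2 = 4 * b ^ 2 * x ^ 4) by (simpl; nra).
    assert (Hb2 : 4 * b ^ 2 * x ^ 2 < 1).
    { rewrite <- pow2_abs. simpl. nra. }
    assert (Hy2 : (s - 1) ^ 2 <= x ^ 2).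
    { assert ((s - 1) ^ 2 <= (s - 1) ^ 2 * (s + 1) ^ 2) by (simpl; nra). simpl in *. nra. }
    simpl in *. nra.
  - unfold field1, field2. rewrite Hy_Habc, Hx_Habc. subst c. split; simpl; nra.
Qed.

(** * Power series on a disk *)

Lemma continuity_pt_of_ex_derive (f : R -> R) (x : R) : ex_derive f x -> continuity_pt f x.
Proof. intros Hf. apply continuity_pt_filterlim. exact (ex_derive_continuous f x Hf). Qed.

Lemma continuity_pt_agree (f g : R -> R) (x0 r : R) : 0 < r ->
  continuity_pt f x0 -> continuity_pt g x0 ->
  (forall x, x <> x0 -> Rabs (x - x0) < r -> f x = g x) -> f x0 = g x0.
Proof.
  intros Hr Hf Hg Efg.
  assert (Hlim : is_lim g x0 (f x0)).
  { apply (is_lim_ext_loc f); [| apply is_lim_continuity; auto].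
    exists (mkposreal r Hr). intros x Hxr Hne. apply Efg; auto. }
  apply is_lim_unique in Hlim. rewrite (is_lim_unique _ _ _ (is_lim_continuity g x0 Hg)) in Hlim.
  injection Hlim. auto.
Qed.

Lemma CV_radius_gt_of_ex_pseries (u : nat -> R) (r : R) :
  (forall x, Rabs x < r -> ex_pseries u x) ->
  forall x, Rabs x < r -> Rbar_lt (Rabs x) (CV_radius u).
Proof.
  intros Hex x Hxr. set (y := (Rabs x + r) / 2).
  pose proof (Rabs_pos x).
  assert (Hy0 : Rabs y = y) by (apply Rabs_right; unfold y; lra).
  assert (Hyr : Rabs y < r) by (rewrite Hy0; unfold y; lra).
  apply Rbar_lt_le_trans with (Rabs y); [simpl; rewrite Hy0; unfold y; lra|].
  destruct (Rbar_le_lt_dec (Rabs y) (CV_radius u)) as [| Hout]; auto.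
  exfalso. apply (CV_disk_outside u y Hout), ex_series_lim_0, ex_pseries_R, Hex, Hyr.
Qed.

Lemma CV_radius_decr_n (u : nat -> R) (k : nat) : CV_radius (PS_decr_n u k) = CV_radius u.
Proof.
  induction k as [| k IHk].
  - apply CV_radius_ext. intro n. reflexivity.
  - rewrite <- IHk, <- (CV_radius_decr_1 (PS_decr_n u k)). apply CV_radius_ext. intro n.
    unfold PS_decr_1, PS_decr_n. f_equal. lia.
Qed.

Section LeadingCoefficients.

Variables (A : nat -> R) (r : R).
Hypotheses (Hr : 0 < r) (HA : forall x, Rabs x < r -> ex_pseries A x).

(* If the first [j] coefficients vanish, [PSeries A x / x ^ j] is the power
   series [PS_decr_n A j], continuous at [0] with value [A j]. *)
Lemma PSeries_coef_of_factor (j : nat) (g : R -> R) :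
  (forall i, (i < j)%nat -> A i = 0) ->
  (forall x, Rabs x < r -> PSeries A x = x ^ j * g x) ->
  continuity_pt g 0 -> A j = g 0.
Proof.
  intros Hz Eg Hg.
  assert (HCV : Rbar_lt 0 (CV_radius A)).
  { rewrite <- Rabs_R0. apply (CV_radius_gt_of_ex_pseries A r); auto. rewrite Rabs_R0; lra. }
  transitivity (PSeries (PS_decr_n A j) 0).
  { rewrite PSeries_0. unfold PS_decr_n. f_equal; lia. }
  apply (continuity_pt_agree _ _ 0 r); auto.
  - apply PSeries_continuity. rewrite CV_radius_decr_n, Rabs_R0. auto.
  - intros x Hx0 Hxr. rewrite Rminus_0_r in Hxr.
    apply (Rmult_eq_reg_l (x ^ j)); [| apply pow_nonzero; auto].
    rewrite <- PSeries_decr_n_aux by auto. apply Eg; auto.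
Qed.

Lemma PSeries_coefs_of_factor (k : nat) (f : R -> R) :
  (forall x, Rabs x < r -> PSeries A x = x ^ k * f x) ->
  continuity_pt f 0 -> (forall j, (j < k)%nat -> A j = 0) /\ A k = f 0.
Proof.
  intros Ef Hf.
  assert (Hz : forall j, (j < k)%nat -> A j = 0).
  { intro j. pattern j. apply lt_wf_ind. clear j. intros j IH Hj.
    rewrite (PSeries_coef_of_factor j (fun x => x ^ (k - j) * f x)).
    - rewrite pow_i by lia. ring.
    - intros i Hi. apply IH; lia.
    - intros x Hxr. rewrite Ef, <- Rmult_assoc, <- pow_add by auto.
      replace (j + (k - j))%nat with k by lia. reflexivity.
    - apply continuity_pt_mult; [apply derivable_continuous_pt, derivable_pt_pow|]. auto. }
  split; auto. apply PSeries_coef_of_factor; auto.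
Qed.

End LeadingCoefficients.

Definition PS_mon (k : nat) : nat -> R := fun n => if Nat.eqb n k then 1 else 0.

Lemma is_pseries_mon (k : nat) (x : R) : is_pseries (PS_mon k) x (x ^ k).
Proof.
  assert (H0 : is_pseries (PS_mon 0) x 1).
  { apply is_pseries_Reals. intros eps Heps. exists 0%nat. intros n _.
    replace (sum_f_R0 (fun n => PS_mon 0 n * x ^ n) n) with 1.
    - unfold R_dist. rewrite Rminus_diag, Rabs_R0. lra.
    - induction n as [| n IHn]; [unfold PS_mon; simpl; ring|].
      rewrite tech5, <- IHn. unfold PS_mon. simpl. ring. }
  apply (is_pseries_ext (PS_incr_n (PS_mon 0) k)).
  - intros n. rewrite PS_incr_n_simplify. unfold PS_mon.
    destruct (Compare_dec.le_lt_dec k n), (Nat.eqb_spec n k), (Nat.eqb_spec (n - k) 0);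
      auto; lia.
  - replace (x ^ k) with (scal (pow_n x k) 1).
    + exact (@is_pseries_incr_n R_AbsRing R_NormedModule _ k x 1 H0).
    + rewrite pow_n_pow. unfold scal; simpl. unfold mult; simpl. ring.
Qed.

Section SeriesOnDisk.

Variable r : R.

Definition is_pseries_on (u : nat -> R) (f : R -> R) : Prop :=
  forall x, Rabs x < r -> is_pseries u x (f x).

Lemma is_pseries_on_mon (k : nat) : is_pseries_on (PS_mon k) (fun x => x ^ k).
Proof. intros x _. apply is_pseries_mon. Qed.

Lemma is_pseries_on_scal (c : R) (u : nat -> R) (f : R -> R) :
  is_pseries_on u f -> is_pseries_on (PS_scal c u) (fun x => c * f x).
Proof.
  intros Hu x Hxr. apply (@is_pseries_scal R_AbsRing R_NormedModule);
    [apply Rmult_comm | auto].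
Qed.

Lemma is_pseries_on_plus (u v : nat -> R) (f g : R -> R) :
  is_pseries_on u f -> is_pseries_on v g -> is_pseries_on (PS_plus u v) (fun x => f x + g x).
Proof. intros Hu Hv x Hxr. apply (@is_pseries_plus R_AbsRing R_NormedModule); auto. Qed.

Lemma is_pseries_on_mult (u v : nat -> R) (f g : R -> R) :
  is_pseries_on u f -> is_pseries_on v g -> is_pseries_on (PS_mult u v) (fun x => f x * g x).
Proof.
  intros Hu Hv x Hxr.
  apply is_pseries_mult; auto;
    apply (CV_radius_gt_of_ex_pseries _ r); auto; intros y Hyr.
  - exists (f y). exact (Hu y Hyr).
  - exists (g y). exact (Hv y Hyr).
Qed.

Definition analytic_on (f : R -> R) : Prop := exists u, is_pseries_on u f.

Lemma analytic_on_const (c : R) : analytic_on (fun _ => c).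
Proof.
  exists (PS_scal c (PS_mon 0)). intros x Hxr.
  pose proof (is_pseries_on_scal c _ _ (is_pseries_on_mon 0) x Hxr) as Hc.
  simpl in Hc. rewrite Rmult_1_r in Hc. exact Hc.
Qed.

Lemma analytic_on_id : analytic_on (fun x => x).
Proof. exists (PS_mon 1). intros x _. rewrite <- pow_1 at 2. apply is_pseries_mon. Qed.

Lemma analytic_on_plus (f g : R -> R) :
  analytic_on f -> analytic_on g -> analytic_on (fun x => f x + g x).
Proof. intros [u Hu] [v Hv]. exists (PS_plus u v). apply is_pseries_on_plus; auto. Qed.

Lemma analytic_on_mult (f g : R -> R) :
  analytic_on f -> analytic_on g -> analytic_on (fun x => f x * g x).
Proof. intros [u Hu] [v Hv]. exists (PS_mult u v). apply is_pseries_on_mult; auto. Qed.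

Lemma analytic_on_pow (f : R -> R) (n : nat) :
  analytic_on f -> analytic_on (fun x => f x ^ n).
Proof.
  intros Hf. induction n as [| n IHn]; simpl.
  - apply analytic_on_const.
  - apply analytic_on_mult; auto.
Qed.

End SeriesOnDisk.

Ltac analytic :=
  repeat match goal with
  | |- analytic_on ?r (fun x => @?f x + @?g x) => apply (analytic_on_plus r f g)
  | |- analytic_on ?r (fun x => @?f x * @?g x) => apply (analytic_on_mult r f g)
  | |- analytic_on ?r (fun x => @?f x ^ ?n) => apply (analytic_on_pow r f n)
  | |- analytic_on ?r (fun x => x) => apply analytic_on_id
  | |- analytic_on ?r (fun _ => ?c) => apply analytic_on_const
  | |- _ => assumption
  end.

Lemma sum_f_R0_scal_l (c : R) (h : nat -> R) (N : nat) :
  sum_f_R0 (fun i => c * h i) N = c * sum_f_R0 h N.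
Proof. rewrite scal_sum. apply sum_eq. intros; ring. Qed.

Lemma sum_f_R0_convolution_le (N : nat) : forall f g : nat -> R,
  (forall n, 0 <= f n) -> (forall n, 0 <= g n) ->
  sum_f_R0 (fun n => sum_f_R0 (fun k => f k * g (n - k)%nat) n) N
  <= sum_f_R0 f N * sum_f_R0 g N.
Proof.
  induction N as [| N IHN]; intros f g Hf Hg; [simpl; lra|].
  rewrite (decomp_sum _ (S N)) by lia. simpl pred.
  rewrite (sum_eq _ (fun i => f 0%nat * g (S i)
                              + sum_f_R0 (fun j => f (S j) * g (i - j)%nat) i) N).
  2: { intros i Hi. rewrite (decomp_sum _ (S i)) by lia. reflexivity. }
  rewrite plus_sum, sum_f_R0_scal_l.
  specialize (IHN (fun j => f (S j)) g (fun n => Hf (S n)) Hg). cbv beta in IHN.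
  rewrite (decomp_sum f (S N)), (decomp_sum g (S N)) by lia. simpl pred.
  change (sum_f_R0 (fun k => f k * g (0 - k)%nat) 0) with (f 0%nat * g 0%nat).
  assert (Hg' : sum_f_R0 g N <= g 0%nat + sum_f_R0 (fun i => g (S i)) N).
  { pose proof (decomp_sum g (S N)) as E. simpl pred in E.
    rewrite <- E, tech5 by lia. pose proof (Hg (S N)). lra. }
  assert (0 <= sum_f_R0 (fun i => f (S i)) N) by (apply cond_pos_sum; auto).
  assert (0 <= sum_f_R0 (fun i => g (S i)) N) by (apply cond_pos_sum; auto).
  pose proof (Hf 0%nat). pose proof (Hg 0%nat).
  assert (sum_f_R0 (fun i => f (S i)) N * sum_f_R0 g N
          <= sum_f_R0 (fun i => f (S i)) N * (g 0%nat + sum_f_R0 (fun i => g (S i)) N))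
    by (apply Rmult_le_compat_l; auto).
  nra.
Qed.

(* A bound uniform in [N] gives convergence on the disk of radius [r]. *)
Definition PS_weight (r : R) (u : nat -> R) (N : nat) : R :=
  sum_f_R0 (fun n => Rabs (u n) * r ^ n) N.

Section Weight.

Variable r : R.
Hypothesis Hr : 0 <= r.

Lemma PS_weight_nonneg (u : nat -> R) (N : nat) : 0 <= PS_weight r u N.
Proof. apply cond_pos_sum. intros. apply Rmult_le_pos; [apply Rabs_pos | apply pow_le; auto]. Qed.

Lemma PS_weight_term (u : nat -> R) (n : nat) : Rabs (u n) * r ^ n <= PS_weight r u n.
Proof.
  unfold PS_weight. destruct n as [| n]; [simpl; lra|].
  rewrite tech5. pose proof (PS_weight_nonneg u n). unfold PS_weight in *. lra.
Qed.

Lemma PS_weight_plus (u v : nat -> R) (N : nat) :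
  PS_weight r (PS_plus u v) N <= PS_weight r u N + PS_weight r v N.
Proof.
  unfold PS_weight. rewrite <- plus_sum. apply sum_Rle. intros n _.
  rewrite <- Rmult_plus_distr_r. apply Rmult_le_compat_r; [apply pow_le; auto|].
  apply Rabs_triang.
Qed.

Lemma PS_weight_scal (c : R) (u : nat -> R) (N : nat) :
  PS_weight r (PS_scal c u) N = Rabs c * PS_weight r u N.
Proof.
  unfold PS_weight. rewrite <- sum_f_R0_scal_l. apply sum_eq. intros.
  unfold PS_scal, scal; simpl. unfold mult; simpl. rewrite Rabs_mult. ring.
Qed.

Lemma PS_weight_mult (u v : nat -> R) (N : nat) :
  PS_weight r (PS_mult u v) N <= PS_weight r u N * PS_weight r v N.
Proof.
  unfold PS_weight. eapply Rle_trans; [| apply sum_f_R0_convolution_le];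
    [| intros; apply Rmult_le_pos; [apply Rabs_pos | apply pow_le; auto] ..].
  apply sum_Rle. intros n Hn. unfold PS_mult.
  eapply Rle_trans; [apply Rmult_le_compat_r; [apply pow_le; auto | apply Rsum_abs]|].
  rewrite Rmult_comm, scal_sum. right. apply sum_eq. intros k Hk.
  rewrite Rabs_mult. replace (r ^ n) with (r ^ k * r ^ (n - k)) by (rewrite <- pow_add; f_equal; lia).
  ring.
Qed.

Lemma PS_weight_mon (k N : nat) : PS_weight r (PS_mon k) N <= r ^ k.
Proof.
  unfold PS_weight. induction N as [| N IHN].
  - unfold PS_mon. simpl. destruct k; simpl.
    + rewrite Rabs_R1. lra.
    + rewrite Rabs_R0. pose proof (pow_le r (S k) Hr). simpl in *. lra.
  - rewrite tech5. unfold PS_mon at 2. destruct (Nat.eqb_spec (S N) k) as [<- | Hne].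
    + rewrite Rabs_R1, Rmult_1_l.
      rewrite (sum_eq _ (fun _ => 0)), sum_cte; [lra|].
      intros i Hi. unfold PS_mon.
      destruct (Nat.eqb_spec i (S N)); [lia|]. rewrite Rabs_R0. ring.
    + rewrite Rabs_R0, Rmult_0_l, Rplus_0_r. auto.
Qed.

End Weight.

Lemma PS_mult_prefix (u v w w' : nat -> R) (j : nat) :
  (forall i, (i <= j)%nat -> u i = v i) -> (forall i, (i <= j)%nat -> w i = w' i) ->
  PS_mult u w j = PS_mult v w' j.
Proof. intros Huv Hww. unfold PS_mult. apply sum_eq. intros i Hi. rewrite Huv, Hww by lia. auto. Qed.

Lemma PS_mult_strict_prefix (u v w w' : nat -> R) (m : nat) :
  u 0%nat = 0 -> v 0%nat = 0 -> w 0%nat = 0 -> w' 0%nat = 0 ->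
  (forall i, (i < m)%nat -> u i = v i) -> (forall i, (i < m)%nat -> w i = w' i) ->
  PS_mult u w m = PS_mult v w' m.
Proof.
  intros u0 v0 w0 w'0 Huv Hww. unfold PS_mult. apply sum_eq. intros k Hk.
  destruct (Nat.eq_dec k 0) as [-> | Hk0]; [rewrite u0, v0; ring|].
  destruct (Nat.eq_dec k m) as [-> | Hkm]; [rewrite Nat.sub_diag, w0, w'0; ring|].
  rewrite Huv, Hww by lia. auto.
Qed.

Lemma PS_mult_0 (u w : nat -> R) : u 0%nat = 0 -> PS_mult u w 0 = 0.
Proof. intros u0. unfold PS_mult. simpl. rewrite u0. ring. Qed.

(** * The analytic solution of [H_y = 0] *)

Section AnalyticGraph.

Variables a b : R.

(* The equation [y + b x^2 + 3/2 y^2 + a x^3 + b x^2 y + 1/2 y^3 = 0] as the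
   fixed-point problem [y = graph_map y] on coefficient sequences. *)
Definition graph_map (u : nat -> R) : nat -> R :=
  PS_plus (PS_plus (PS_plus (PS_plus
    (PS_scal (- b) (PS_mon 2)) (PS_scal (- a) (PS_mon 3)))
    (PS_scal (- (3 / 2)) (PS_mult u u))) (PS_scal (- b) (PS_mult (PS_mon 2) u)))
    (PS_scal (- / 2) (PS_mult u (PS_mult u u))).

Lemma is_pseries_on_graph_map (r : R) (u : nat -> R) (f : R -> R) :
  is_pseries_on r u f ->
  is_pseries_on r (graph_map u) (fun x =>
    - b * x ^ 2 - a * x ^ 3 - 3 / 2 * f x ^ 2 - b * x ^ 2 * f x - / 2 * f x ^ 3).
Proof.
  intros Hu.
  assert (Hg : is_pseries_on r (graph_map u) (fun x =>
    - b * x ^ 2 + - a * x ^ 3 + - (3 / 2) * (f x * f x)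
    + - b * (x ^ 2 * f x) + - / 2 * (f x * (f x * f x)))).
  { unfold graph_map.
    repeat match goal with
    | |- is_pseries_on _ (PS_plus _ _) _ => apply is_pseries_on_plus
    | |- is_pseries_on _ (PS_scal _ _) _ => apply is_pseries_on_scal
    | |- is_pseries_on _ (PS_mult _ _) _ => apply is_pseries_on_mult
    | |- is_pseries_on _ (PS_mon _) _ => apply is_pseries_on_mon
    | |- _ => assumption
    end. }
  intros x Hxr. replace (- b * x ^ 2 - a * x ^ 3 - 3 / 2 * f x ^ 2 - b * x ^ 2 * f x
    - / 2 * f x ^ 3) with (- b * x ^ 2 + - a * x ^ 3 + - (3 / 2) * (f x * f x)
    + - b * (x ^ 2 * f x) + - / 2 * (f x * (f x * f x))) by field.
  apply Hg, Hxr.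
Qed.

Lemma graph_map_0 (u : nat -> R) : u 0%nat = 0 -> graph_map u 0 = 0.
Proof.
  intros u0. unfold graph_map, PS_plus, PS_scal, PS_mon. simpl.
  rewrite !PS_mult_0 by auto. unfold plus, scal; simpl. unfold mult; simpl. ring.
Qed.

Lemma graph_map_causal (u v : nat -> R) (m : nat) : u 0%nat = 0 -> v 0%nat = 0 ->
  (forall i, (i < m)%nat -> u i = v i) -> graph_map u m = graph_map v m.
Proof.
  intros u0 v0 Huv. unfold graph_map, PS_plus, PS_scal.
  rewrite (PS_mult_strict_prefix u v u v m), (PS_mult_strict_prefix (PS_mon 2) (PS_mon 2) u v m),
    (PS_mult_strict_prefix u v (PS_mult u u) (PS_mult v v) m); auto using PS_mult_0.
  intros i Hi. apply PS_mult_prefix; intros; apply Huv; lia.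
Qed.

Definition graph_iter (k : nat) : nat -> R := Nat.iter k graph_map (fun _ => 0).

Lemma graph_iter_0 (k : nat) : graph_iter k 0 = 0.
Proof. induction k as [| k IHk]; [reflexivity|]. apply graph_map_0, IHk. Qed.

Lemma graph_iter_stable (k m : nat) : (m < k)%nat -> graph_iter (S k) m = graph_iter k m.
Proof.
  revert m. induction k as [| k IHk]; intros m Hm; [lia|].
  change (graph_map (graph_iter (S k)) m = graph_map (graph_iter k) m).
  apply graph_map_causal; [apply graph_iter_0 | apply graph_iter_0|].
  intros i Hi. apply IHk. lia.
Qed.

Lemma graph_iter_stable_add (k d m : nat) : (m < k)%nat -> graph_iter (k + d) m = graph_iter k m.
Proof.
  intros Hm. induction d as [| d IHd]; [rewrite Nat.add_0_r; auto|].
  rewrite Nat.add_succ_r, graph_iter_stable by lia. auto.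
Qed.

(* Coefficient [n] of [graph_iter k] is stationary for [k > n]. *)
Definition graph_coef (n : nat) : R := graph_iter (S n) n.

Lemma graph_coef_iter (i m : nat) : (i <= m)%nat -> graph_coef i = graph_iter (S m) i.
Proof.
  intros Hi. unfold graph_coef. replace (S m) with (S i + (m - i))%nat by lia.
  rewrite graph_iter_stable_add; auto.
Qed.

Lemma graph_coef_0 : graph_coef 0 = 0.
Proof. apply graph_iter_0. Qed.

Lemma graph_coef_fix (m : nat) : graph_coef m = graph_map graph_coef m.
Proof.
  rewrite (graph_map_causal graph_coef (graph_iter (S m)));
    [| apply graph_coef_0 | apply graph_iter_0 | intros i Hi; apply graph_coef_iter; lia].
  change (graph_coef m = graph_iter (S (S m)) m).
  symmetry. apply graph_iter_stable. lia.
Qed.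

Lemma graph_coef_1 : graph_coef 1 = 0.
Proof.
  rewrite graph_coef_fix. unfold graph_map, PS_plus, PS_scal, PS_mult, PS_mon. simpl.
  rewrite graph_coef_0. unfold plus, scal; simpl. unfold mult; simpl. ring.
Qed.

End AnalyticGraph.

Section GraphConvergence.

Variables a b : R.

Lemma PS_weight_graph_map (r : R) (d : nat -> R) (N : nat) : 0 <= r ->
  PS_weight r (graph_map a b d) N <=
  Rabs b * r ^ 2 + Rabs a * r ^ 3 + 3 / 2 * PS_weight r d N ^ 2
  + Rabs b * r ^ 2 * PS_weight r d N + / 2 * PS_weight r d N ^ 3.
Proof.
  intros Hr. unfold graph_map.
  set (W := PS_weight r). set (D := W d N).
  assert (HD : 0 <= D) by apply PS_weight_nonneg, Hr.
  assert (Hsum : forall u1 u2 u3 u4 u5 : nat -> R,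
    W (PS_plus (PS_plus (PS_plus (PS_plus u1 u2) u3) u4) u5) N
    <= W u1 N + W u2 N + W u3 N + W u4 N + W u5 N).
  { intros. unfold W.
    pose proof (PS_weight_plus r Hr (PS_plus (PS_plus (PS_plus u1 u2) u3) u4) u5 N).
    pose proof (PS_weight_plus r Hr (PS_plus (PS_plus u1 u2) u3) u4 N).
    pose proof (PS_weight_plus r Hr (PS_plus u1 u2) u3 N).
    pose proof (PS_weight_plus r Hr u1 u2 N). lra. }
  eapply Rle_trans; [apply Hsum|]. unfold W. rewrite !PS_weight_scal, !Rabs_Ropp,
    (Rabs_right (3 / 2)), (Rabs_right (/ 2)) by lra. fold W D.
  assert (Hdd : W (PS_mult d d) N <= D ^ 2).
  { replace (D ^ 2) with (D * D) by ring. apply PS_weight_mult, Hr. }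
  assert (Hddd : W (PS_mult d (PS_mult d d)) N <= D ^ 3).
  { eapply Rle_trans; [apply PS_weight_mult, Hr|]. fold W D.
    replace (D ^ 3) with (D * D ^ 2) by ring. apply Rmult_le_compat_l; auto. }
  assert (H2d : W (PS_mult (PS_mon 2) d) N <= r ^ 2 * D).
  { eapply Rle_trans; [apply PS_weight_mult, Hr|]. fold W D.
    apply Rmult_le_compat_r, PS_weight_mon; auto. }
  assert (Hm2 : W (PS_mon 2) N <= r ^ 2) by apply PS_weight_mon, Hr.
  assert (Hm3 : W (PS_mon 3) N <= r ^ 3) by apply PS_weight_mon, Hr.
  pose proof (Rabs_pos a). pose proof (Rabs_pos b).
  assert (Rabs b * W (PS_mult (PS_mon 2) d) N <= Rabs b * (r ^ 2 * D))
    by (apply Rmult_le_compat_l; auto).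
  assert (Rabs b * W (PS_mon 2) N <= Rabs b * r ^ 2) by (apply Rmult_le_compat_l; auto).
  assert (Rabs a * W (PS_mon 3) N <= Rabs a * r ^ 3) by (apply Rmult_le_compat_l; auto).
  lra.
Qed.

(* Since [graph_map] is causal, the weight of [graph_coef] up to [N] is that
   of [graph_map] applied to the truncation of [graph_coef] below [N]; the
   bound [1/50] is then reproduced by [PS_weight_graph_map]. *)
Lemma graph_coef_weight_le (r : R) : 0 < r -> Rabs b * r ^ 2 + Rabs a * r ^ 3 <= / 100 ->
  forall N, PS_weight r (graph_coef a b) N <= / 50.
Proof.
  intros Hr Hab N. pattern N. apply lt_wf_ind. clear N. intros N IH.
  set (c := graph_coef a b).
  set (d := fun i => if (i <? N)%nat then c i else 0).
  assert (E : PS_weight r c N = PS_weight r (graph_map a b d) N).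
  { unfold PS_weight. apply sum_eq. intros n Hn. unfold c. rewrite graph_coef_fix.
    do 2 f_equal. apply graph_map_causal.
    - apply graph_coef_0.
    - unfold d. destruct (0 <? N)%nat; [apply graph_coef_0 | reflexivity].
    - intros i Hi. unfold d. destruct (Nat.ltb_spec i N); auto; lia. }
  assert (HD : PS_weight r d N <= / 50).
  { destruct N as [| N].
    - unfold PS_weight, d. simpl. rewrite Rabs_R0. lra.
    - unfold PS_weight. rewrite tech5. unfold d at 2. rewrite (proj2 (Nat.ltb_ge _ _)) by lia.
      rewrite Rabs_R0, Rmult_0_l, Rplus_0_r.
      rewrite (sum_eq _ (fun n => Rabs (c n) * r ^ n)); [apply IH; lia|].
      intros i Hi. unfold d. rewrite (proj2 (Nat.ltb_lt _ _)) by lia. auto. }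
  rewrite E. eapply Rle_trans; [apply PS_weight_graph_map; lra|].
  pose proof (PS_weight_nonneg r (Rlt_le _ _ Hr) d N).
  set (D := PS_weight r d N) in *.
  pose proof (Rabs_pos a). pose proof (Rabs_pos b).
  assert (Rabs b * r ^ 2 <= / 100) by (pose proof (pow_le r 3 (Rlt_le _ _ Hr)); nra).
  assert (Rabs b * r ^ 2 * D <= / 100 * D) by (apply Rmult_le_compat_r; lra).
  simpl. nra.
Qed.

Lemma graph_coef_ex_pseries : exists r, 0 < r /\ forall x, Rabs x < r -> ex_pseries (graph_coef a b) x.
Proof.
  set (r := / (10 * (1 + Rabs a + Rabs b))).
  pose proof (Rabs_pos a). pose proof (Rabs_pos b).
  assert (Hr : 0 < r) by (apply Rinv_0_lt_compat; lra).
  assert (Hr1 : r * (10 * (1 + Rabs a + Rabs b)) = 1) by (unfold r; field; lra).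
  assert (Hr10 : r <= / 10) by (unfold r; apply Rinv_le_contravar; lra).
  exists r. split; auto. intros x Hxr. apply CV_radius_inside.
  apply Rbar_lt_le_trans with r; [exact Hxr|].
  apply (proj1 (CV_radius_bounded (graph_coef a b))). exists (/ 50). intros n.
  rewrite Rabs_mult, (Rabs_right (r ^ n)) by (apply Rle_ge, pow_le; lra).
  eapply Rle_trans; [apply PS_weight_term; lra|].
  apply graph_coef_weight_le; auto.
  assert (Hab : (Rabs a + Rabs b) * r <= / 10) by nra.
  assert (Rabs a * r ^ 3 <= Rabs a * r ^ 2)
    by (apply Rmult_le_compat_l; [lra | simpl; nra]).
  simpl in *. nra.
Qed.

Lemma graph_coef_solves : exists r, 0 < r /\
  is_pseries_on r (graph_coef a b) (PSeries (graph_coef a b)) /\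
  forall x, Rabs x < r -> let y := PSeries (graph_coef a b) x in
    y + b * x ^ 2 + 3 / 2 * y ^ 2 + a * x ^ 3 + b * x ^ 2 * y + / 2 * y ^ 3 = 0.
Proof.
  destruct graph_coef_ex_pseries as [r [Hr Hex]].
  assert (Hc : is_pseries_on r (graph_coef a b) (PSeries (graph_coef a b)))
    by (intros x Hxr; apply PSeries_correct, Hex, Hxr).
  exists r. repeat split; auto. intros x Hxr y.
  assert (Ey : y = PSeries (graph_map a b (graph_coef a b)) x)
    by (apply PSeries_ext; intros n; apply graph_coef_fix).
  rewrite (is_pseries_unique _ _ _ (is_pseries_on_graph_map a b r _ _ Hc x Hxr)) in Ey.
  fold y in Ey. lra.
Qed.

End GraphConvergence.

(** * [Habc] along the solution *)

Definition Habc_quotient (a b c x v : R) : R :=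
  / 2 * v ^ 2 + b * v + c + a * x * v + x ^ 2 * (/ 2 * v ^ 3 + b / 2 * v ^ 2) + / 8 * x ^ 4 * v ^ 4.

Lemma Habc_parabola a b c x v :
  Habc a b c x (x ^ 2 * v) = x ^ 3 * (a + x * Habc_quotient a b c x v).
Proof. unfold Habc, Habc_quotient. field. Qed.

Section GraphAsymptotics.

Variables (a b c delta : R) (phi : R -> R) (p A : nat -> R).
Hypotheses (Hdelta : 0 < delta) (Hp0 : p 0%nat = 0) (Hp1 : p 1%nat = 0)
  (Hp : forall x, Rabs x < delta -> is_pseries p x (phi x))
  (Hgraph : forall x, Rabs x < delta -> Hy (Habc a b c) x (phi x) = 0)
  (HA : forall x, Rabs x < delta -> is_pseries A x (Habc a b c x (phi x))).

Let g := PSeries (PS_decr_n p 2).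

Lemma graph_parabola x : Rabs x < delta -> phi x = x ^ 2 * g x.
Proof.
  intros Hxr. rewrite <- (is_pseries_unique _ _ _ (Hp x Hxr)).
  apply PSeries_decr_n_aux. intros k Hk. destruct k as [| [| k]]; auto; lia.
Qed.

Lemma graph_quotient_derivable : ex_derive g 0.
Proof.
  apply ex_derive_PSeries. rewrite CV_radius_decr_n.
  apply (CV_radius_gt_of_ex_pseries p delta); [intros y Hyd; exists (phi y); exact (Hp y Hyd)|].
  rewrite Rabs_R0. lra.
Qed.

Lemma graph_quotient_0 : g 0 = - b.
Proof.
  pose proof graph_quotient_derivable as Hg.
  rewrite (continuity_pt_agree g
    (fun x => - b - (3 / 2 * x ^ 2 * g x ^ 2 + a * x + b * x ^ 2 * g x + / 2 * x ^ 4 * g x ^ 3))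
    0 delta); [ring | lra | apply continuity_pt_of_ex_derive; auto
              | apply continuity_pt_of_ex_derive; auto_derive; auto |].
  intros x Hx0 Hxr. rewrite Rminus_0_r in Hxr.
  specialize (Hgraph x Hxr). rewrite Hy_Habc, graph_parabola in Hgraph by auto.
  apply (Rmult_eq_reg_l (x ^ 2)); [| apply pow_nonzero; auto]. lra.
Qed.

Lemma Habc_graph_coefs :
  (forall j, (j < 3)%nat -> A j = 0) /\ A 3%nat = a /\ (a = 0 -> A 4%nat = c - b ^ 2 / 2).
Proof.
  pose proof graph_quotient_derivable as Hg.
  assert (HexA : forall x, Rabs x < delta -> ex_pseries A x)
    by (intros x Hxr; exists (Habc a b c x (phi x)); exact (HA x Hxr)).
  assert (EA : forall x, Rabs x < delta ->
    PSeries A x = x ^ 3 * (a + x * Habc_quotient a b c x (g x))).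
  { intros x Hxr. rewrite (is_pseries_unique _ _ _ (HA x Hxr)), graph_parabola by auto.
    apply Habc_parabola. }
  destruct (PSeries_coefs_of_factor A delta Hdelta HexA 3
              (fun x => a + x * Habc_quotient a b c x (g x))) as [Hz H3]; auto.
  { apply continuity_pt_of_ex_derive. unfold Habc_quotient. auto_derive. repeat split; auto. }
  split; [auto | split; [rewrite H3; ring |]].
  intros Ha0. destruct (PSeries_coefs_of_factor A delta Hdelta HexA 4
              (fun x => Habc_quotient a b c x (g x))) as [_ H4].
  - intros x Hxr. rewrite EA, Ha0 by auto. ring.
  - apply continuity_pt_of_ex_derive. unfold Habc_quotient. auto_derive. repeat split; auto.
  - rewrite H4, graph_quotient_0. unfold Habc_quotient. field.
Qed.

End GraphAsymptotics.

Lemma Habc_analytic_graph (a b c : R) :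
  exists delta, 0 < delta /\ exists (phi : R -> R) (p A : nat -> R),
    p 0%nat = 0 /\ p 1%nat = 0 /\
    (forall x, Rabs x < delta -> is_pseries p x (phi x)) /\
    (forall x, Rabs x < delta -> Hy (Habc a b c) x (phi x) = 0) /\
    (forall x, Rabs x < delta -> is_pseries A x (Habc a b c x (phi x))).
Proof.
  destruct (graph_coef_solves a b) as [r [Hr [Hc Hsol]]].
  assert (Hphi : analytic_on r (PSeries (graph_coef a b))) by (exists (graph_coef a b); auto).
  assert (HH : analytic_on r (fun x => Habc a b c x (PSeries (graph_coef a b) x)))
    by (unfold Habc; analytic).
  destruct HH as [A HA].
  exists r. split; auto. exists (PSeries (graph_coef a b)), (graph_coef a b), A.
  repeat split; auto using graph_coef_0, graph_coef_1.
  intros x Hxr. rewrite Hy_Habc. apply Hsol, Hxr.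
Qed.

Lemma H0star_leading_Habc_3 (a b c hk : R) :
  H0star_leading (Habc a b c) 3 hk <-> hk = a /\ a <> 0.
Proof.
  split.
  - intros [delta [Hd [phi [p [A [Hp0 [Hp1 [Hp [Hg [HA [_ [Hk Hnz]]]]]]]]]]]].
    destruct (Habc_graph_coefs a b c delta phi p A) as [_ [H3 _]]; auto.
    subst hk. rewrite H3 in *. auto.
  - intros [-> Ha]. destruct (Habc_analytic_graph a b c) as [delta [Hd [phi [p [A HA]]]]].
    destruct HA as (Hp0 & Hp1 & Hp & Hg & HA).
    destruct (Habc_graph_coefs a b c delta phi p A) as [Hz [H3 _]]; auto.
    exists delta. split; auto. exists phi, p, A. repeat split; auto.
Qed.

Lemma H0star_leading_Habc_4 (a b c hk : R) :
  H0star_leading (Habc a b c) 4 hk <-> a = 0 /\ hk = c - b ^ 2 / 2 /\ hk <> 0.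
Proof.
  split.
  - intros [delta [Hd [phi [p [A [Hp0 [Hp1 [Hp [Hg [HA [Hz [Hk Hnz]]]]]]]]]]]].
    destruct (Habc_graph_coefs a b c delta phi p A) as [_ [H3 H4]]; auto.
    assert (Ha : a = 0) by (rewrite <- H3; apply Hz; lia).
    subst hk. rewrite H4 in *; auto.
  - intros (Ha & -> & Hnz). destruct (Habc_analytic_graph a b c) as [delta [Hd [phi [p [A HA]]]]].
    destruct HA as (Hp0 & Hp1 & Hp & Hg & HA).
    destruct (Habc_graph_coefs a b c delta phi p A) as [Hz [H3 H4]]; auto.
    exists delta. split; auto. exists phi, p, A. repeat split; auto.
    intros j Hj. destruct (Nat.eq_dec j 3) as [-> | Hj3]; [lra | apply Hz; lia].
Qed.

Lemma Habc_isolated_nilpotent_iff (a b c : R) :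
  isolated_nilpotent_singular_origin (Habc a b c) <-> a <> 0 \/ c <> b ^ 2 / 2.
Proof.
  split.
  - intros [Hiso _]. destruct (Req_dec a 0) as [-> | Ha]; [right | left; auto].
    intros Hc. apply (Habc_not_isolated b c Hc Hiso).
  - intros Hcoef. split; [apply Habc_isolated, Hcoef | apply Habc_nilpotent].
Qed.

Lemma Habc_classification (a b c : R) :
  let s := c - b ^ 2 / 2 in
  (isolated_nilpotent_singular_origin (Habc a b c) <->
     a <> 0 \/ (a = 0 /\ s < 0) \/ (a = 0 /\ 0 < s)) /\
  (cusp_of_order (Habc a b c) 1 <-> a <> 0) /\
  (nilpotent_saddle_of_order (Habc a b c) 1 <-> a = 0 /\ s < 0) /\
  (nilpotent_center_of_order (Habc a b c) 1 <-> a = 0 /\ 0 < s).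
Proof.
  intros s. unfold cusp_of_order, nilpotent_saddle_of_order, nilpotent_center_of_order.
  change (2 * 1 + 1)%nat with 3%nat. change (2 * 1 + 2)%nat with 4%nat.
  rewrite Habc_isolated_nilpotent_iff.
  setoid_rewrite H0star_leading_Habc_3. setoid_rewrite H0star_leading_Habc_4. fold s.
  split; [| split; [| split]].
  - split.
    + intros [Ha | Hc]; [left; auto|].
      destruct (Req_dec a 0) as [Ha | Ha]; [right | left; auto].
      destruct (Rtotal_order s 0) as [Hs | [Hs | Hs]];
        [left | exfalso; apply Hc; unfold s in Hs; lra | right]; auto.
    + intros [Ha | [[_ Hs] | [_ Hs]]]; [left; auto | right; unfold s in Hs; intro; lra ..].
  - split; [intros [hk [_ Ha]]; auto | intros Ha; exists a; auto].
  - split; [intros [hk [[Ha [-> _]] Hs]]; auto |].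
    intros [Ha Hs]. exists s. repeat split; auto; lra.
  - split; [intros [hk [[Ha [-> _]] Hs]]; auto |].
    intros [Ha Hs]. exists s. repeat split; auto; lra.
Qed.

Theorem theorem5 (h11 h20 h31 h40 : R) :
  let H := H2bar h11 h20 h31 h40 in
  let condA := h31 <> -2 * h11 * h20 in
  let condB := h31 = -2 * h11 * h20 /\ 0 < h20 ^ 2 + h40 in
  let condC := h31 = -2 * h11 * h20 /\ h20 ^ 2 + h40 < 0 in
  (isolated_nilpotent_singular_origin H <-> (condA \/ condB \/ condC)) /\
  (cusp_of_order H 1 <-> condA) /\
  (nilpotent_saddle_of_order H 1 <-> condB) /\
  (nilpotent_center_of_order H 1 <-> condC).
Proof.
  intros H condA condB condC. unfold H, condA, condB, condC.
  rewrite H2bar_Habc.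
  set (a := 8 * h11 * h20 + 4 * h31). set (b := 4 * h20 - 2 * h11 ^ 2).
  set (c := 2 * h11 ^ 2 * (h11 ^ 2 + 4 * h20) + 8 * (h11 * h31 - h40)).
  assert (Ha : a = 0 <-> h31 = -2 * h11 * h20) by (unfold a; split; intros; lra).
  assert (Hs : a = 0 -> c - b ^ 2 / 2 = -8 * (h20 ^ 2 + h40)).
  { unfold a, b, c. intros Ha0. replace h31 with (-2 * h11 * h20) by lra. field. }
  assert (HB : a = 0 /\ c - b ^ 2 / 2 < 0 <-> a = 0 /\ 0 < h20 ^ 2 + h40)
    by (split; intros [Ha0 Hlt]; specialize (Hs Ha0); split; auto; lra).
  assert (HC : a = 0 /\ 0 < c - b ^ 2 / 2 <-> a = 0 /\ h20 ^ 2 + h40 < 0)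
    by (split; intros [Ha0 Hlt]; specialize (Hs Ha0); split; auto; lra).
  destruct (Habc_classification a b c) as (Hiso & Hcusp & Hsaddle & Hcenter).
  rewrite Hiso, Hcusp, Hsaddle, Hcenter, HB, HC, <- Ha. tauto.
Qed.
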